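(* Let $(X,M)$ be an intrinsic Möbius space and let $d$ be a (possibly extended) quasi-metric on $X$ that induces $M$. Let $d'$ be either a rescaling $d'=\lambda d$ ($\lambda>0$) of $d$ or the involution $d'=d_o$ of $d$ at a point $o\in X$ which is not the point at infinity of $d$. Then $\dim_{Haus}(X,d)=\dim_{Haus}(X,d')$. In particular, setting $\dim_{Haus}(X,M):=\dim_{Haus}(X,d)$ for any quasi-metric $d$ inducing $M$ gives a well-defined quantity, and if $f:(X,M)\to(X',M')$ is a Möbius equivalence between intrinsic Möbius spaces, then $\dim_{Haus}(X,M)=\dim_{Haus}(X',M')$.
   Context: Let $X$ be a set with at least three points. A semi-metric is a symmetric map $d:X\times X\to[0,\infty)$ with $d(x,y)=0\iff x=y$. An extended semi-metric is a map $d:X\times X\to[0,\infty]$, symmetric with $d(x,y)=0\iff x=y$, for which there is exactly one point $\infty\in X$ (the point at infinity) with $d(x,\infty)=\infty$ for $x\neq\infty$ and $d(x,y)<\infty$ for $x,y\neq\infty$. For $K\ge1$, a (possibly extended) $K$-quasi-metric is a (possibly extended) semi-metric with $d(x,y)\le K\max(d(x,z),d(z,y))$ for all $x,y,z$; a quasi-metric is a $K$-quasi-metric for some $K$. Admissible quadruples $\mathcal A_4$: quadruples in $X^4$ in which no point appears more than twice; non-degenerate means all entries distinct. Let $\overline\Delta=\{(a:b:c)\in\mathbb RP^2: a,b,c>0\}\cup\{(1:1:0),(1:0:1),(0:1:1)\}$. The cross-ratio triple of $d$ is $crt_d(wxyz)=(d(w,x)d(y,z):d(w,y)d(z,x):d(w,z)d(x,y))$,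 where infinite distances cancel: $crt_d(\infty xyz)=(d(y,z):d(z,x):d(x,y))$, $crt_d(\infty\infty yz)=(0:1:1)$, and analogously for permutations. Let $L_4=\{(x,y,z)\in\mathbb R^3:x+y+z=0\}$, $\overline{L_4}=L_4\cup\{(0,\infty,-\infty),(-\infty,0,\infty),(\infty,-\infty,0)\}$, and $\overline\Phi:\overline\Delta\to\overline{L_4}$, $(a:b:c)\mapsto(\ln(b/c),\ln(c/a),\ln(a/b))$, extended by $(1:1:0)\mapsto(\infty,-\infty,0)$, $(1:0:1)\mapsto(-\infty,0,\infty)$, $(0:1:1)\mapsto(0,\infty,-\infty)$. Let $\varphi:\mathcal S_4\to\mathcal S_3$ be the homomorphism given by the induced permutation of the triple $((12)(34),(13)(42),(14)(23))$; $\mathcal S_3$ acts on $\overline{L_4}$ by permuting coordinates. A generalized Möbius structure is a map $M:\mathcal A_4\to\overline{L_4}$ such that: (1) $M(\pi P)=\mathrm{sgn}(\pi)\varphi(\pi)M(P)$ for all $P\in\mathcal A_4$, $\pi\in\mathcal S_4$; (2) $M(P)\in L_4$ iff $P$ is non-degenerate; (3) $M(xxyz)=(0,\infty,-\infty)$; (4) for every admissible 5-tuple $(x,y,\omega,\alpha,\beta)$ with $(\omega,\alpha,\beta)$ non-degenerate, $\alpha\ne x\ne\beta$, $\alpha\ne y\ne\beta$, there is $\lambda\in\mathbb R\cup\{\pm\infty\}$ with $M(\alpha x\omega\beta)+M(\alpha\omega y\beta)-M(\alpha xy\beta)=(\lambda,-\lambda,0)$; moreover the first component of the left side is well defined when $x\neq\beta$,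 $y\ne\alpha$, and the second when $x\ne\alpha$, $y\ne\beta$. Write $crt=\overline\Phi^{-1}\circ M$. A semi-metric $d$ induces $M$ if $crt=crt_d$. $M$ is intrinsic (and $(X,M)$ an intrinsic Möbius space) if moreover the closure of the image of $crt$ in $\mathbb RP^2$ contains none of $(1:0:0),(0:1:0),(0:0:1)$. A Möbius equivalence $f:(X,M)\to(X',M')$ is a bijection with $M'(f(w)f(x)f(y)f(z))=M(wxyz)$ for all admissible quadruples. Involution: for a (possibly extended) quasi-metric $d$ and $o\in X$ other than the point at infinity, $d_o(x,x)=0$, $d_o(x,y)=\frac{d(x,y)}{d(x,o)d(o,y)}$ for distinct $x,y\ne\infty$, $d_o(\infty,y)=1/d(o,y)$ and $d_o(x,\infty)=1/d(x,o)$ for the respective distinct points, with the convention $\lambda/0=\infty$ for $\lambda>0$. Hausdorff dimension of a (possibly extended) quasi-metric space $(X,d)$: $B_r(x)=\{y:d(x,y)\le r\}$; a $\delta$-cover of a set is a cover by closed balls $B_{r_i}(x_i)$ with $r_i\le\delta$. For $A\subseteq X$, $s\ge0$: $\mu^s_{\delta,d}(A)=\inf\{\sum_i r_i^s:\{B_{r_i}(x_i)\}\text{ a }\delta\text{-cover of }A\setminus\{\infty\}\}$, $\mu^s_d(A)=\lim_{\delta\to0}\mu^s_{\delta,d}(A)$, and $\dim_{Haus}(X,d)=\inf\{s\in\mathbb R:\mu^s_d(X)=0\}$. *)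

From HB Require Import structures.
From mathcomp Require Import all_boot all_order all_algebra all_fingroup.
From mathcomp Require Import all_classical all_reals all_analysis.
Set Implicit Arguments. Unset Strict Implicit. Unset Printing Implicit Defensive.
Import Order.TTheory GRing.Theory Num.Theory.
Import numFieldTopology.Exports.
Local Open Scope classical_set_scope.
Local Open Scope ring_scope.

Section Defs.
Variable R : realType.

Definition at_least_three_points (X : Type) : Prop :=
  exists x y z : X, x <> y /\ y <> z /\ x <> z.

Definition admissible {X : Type} {n : nat} (P : 'I_n -> X) : Prop :=
  forall i j k : 'I_n, i != j -> j != k -> i != k -> ~ (P i = P j /\ P j = P k).

Definition nondegenerate {X : Type} {n : nat} (P : 'I_n -> X) : Prop :=
  injective P.

Definition q4 {X : Type} (a b c e : X) : 'I_4 -> X :=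
  fun i => match nat_of_ord i with 0 => a | 1 => b | 2 => c | _ => e end.

Definition q5 {X : Type} (a b c e f : X) : 'I_5 -> X :=
  fun i => match nat_of_ord i with 0 => a | 1 => b | 2 => c | 3 => e | _ => f end.

Definition is_infpt {X : Type} (d : X -> X -> \bar R) (p : X) : Prop :=
  forall x, x <> p -> d x p = +oo%E.

Definition semimetric {X : Type} (d : X -> X -> \bar R) : Prop :=
  (forall x y, d x y = d y x) /\ (forall x y, d x y = 0%E <-> x = y) /\
  (forall x y, (0 <= d x y)%E) /\ (forall x y, (d x y < +oo)%E).

Definition ext_semimetric {X : Type} (d : X -> X -> \bar R) : Prop :=
  (forall x y, d x y = d y x) /\ (forall x y, d x y = 0%E <-> x = y) /\
  (forall x y, (0 <= d x y)%E) /\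
  exists inf : X,
    (forall x, x <> inf -> d x inf = +oo%E) /\
    (forall x y, x <> inf -> y <> inf -> (d x y < +oo)%E) /\
    (forall p, (forall x, x <> p -> d x p = +oo%E) -> p = inf).

Definition K_quasi_ineq {X : Type} (K : R) (d : X -> X -> \bar R) : Prop :=
  forall x y z, (d x y <= K%:E * Order.max (d x z) (d z y))%E.

Definition quasi_metric {X : Type} (d : X -> X -> \bar R) : Prop :=
  (semimetric d \/ ext_semimetric d) /\ exists K : R, 1 <= K /\ K_quasi_ineq K d.

Definition rescale {X : Type} (lam : R) (d : X -> X -> \bar R) : X -> X -> \bar R :=
  fun x y => (lam%:E * d x y)%E.

(* e1 / e2 for positive real e1, finite e2 >= 0, with lambda/0 = +oo *)
Definition ediv (e1 e2 : \bar R) : \bar R :=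
  if e2 == 0%E then +oo%E else (fine e1 / fine e2)%:E.

Definition involution {X : Type} (d : X -> X -> \bar R) (o : X) : X -> X -> \bar R :=
  fun x y =>
    if `[< x = y >] then 0%E
    else if `[< is_infpt d x >] then ediv 1%E (d o y)
    else if `[< is_infpt d y >] then ediv 1%E (d x o)
    else ediv (d x y) (d x o * d o y)%E.

Definition delta_cover {X : Type} (d : X -> X -> \bar R) (A : set X) (delta : R)
    (c : nat -> X) (r : nat -> R) : Prop :=
  (forall i, 0 <= r i /\ r i <= delta) /\
  (forall y, A y -> ~ is_infpt d y -> exists i, (d (c i) y <= (r i)%:E)%E).

Definition hmu_delta {X : Type} (d : X -> X -> \bar R) (s delta : R) (A : set X) : \bar R :=
  ereal_inf [set e | exists c r, delta_cover d A delta c r /\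
                       e = (\sum_(0 <= i <oo) ((r i) `^ s)%:E)%E].

(* limit delta -> 0 of the nonincreasing function delta |-> hmu_delta *)
Definition hmu {X : Type} (d : X -> X -> \bar R) (s : R) (A : set X) : \bar R :=
  ereal_sup [set hmu_delta d s delta A | delta in [set delta : R | 0 < delta]].

Definition hausdorff_dim {X : Type} (d : X -> X -> \bar R) : \bar R :=
  ereal_inf [set s%:E | s in [set s : R | 0 <= s /\ hmu d s setT = 0%E]].

Definition triple := (\bar R * \bar R * \bar R)%type.

Definition coord (v : triple) (j : 'I_3) : \bar R :=
  match nat_of_ord j with 0 => v.1.1 | 1 => v.1.2 | _ => v.2 end.

Definition inL4 (v : triple) : Prop :=
  exists a b c : R, v = (a%:E, b%:E, c%:E) /\ a + b + c = 0.

Definition inL4bar (v : triple) : Prop :=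
  inL4 v \/ v = (0%E, +oo%E, -oo%E) \/ v = (-oo%E, 0%E, +oo%E) \/ v = (+oo%E, -oo%E, 0%E).

(* representatives (a,b,c) of points (a:b:c) of Delta-bar *)
Definition inDeltabar (a b c : R) : Prop :=
  (0 < a /\ 0 < b /\ 0 < c) \/ (a = 0 /\ 0 < b /\ b = c) \/
  (b = 0 /\ 0 < a /\ a = c) \/ (c = 0 /\ 0 < a /\ a = b).

Definition Phibar (a b c : R) : triple :=
  if a == 0 then (0%E, +oo%E, -oo%E)
  else if b == 0 then (-oo%E, 0%E, +oo%E)
  else if c == 0 then (+oo%E, -oo%E, 0%E)
  else ((ln (b / c))%:E, (ln (c / a))%:E, (ln (a / b))%:E).

(* distance with infinite distances "cancelled" (replaced by 1) *)
Definition fd {X : Type} (d : X -> X -> \bar R) (x y : X) : R :=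
  if `[< x <> y /\ (is_infpt d x \/ is_infpt d y) >] then 1 else fine (d x y).

Definition crt_d {X : Type} (d : X -> X -> \bar R) (P : 'I_4 -> X) : R * R * R :=
  let w := P (inord 0) in let x := P (inord 1) in
  let y := P (inord 2) in let z := P (inord 3) in
  (fd d w x * fd d y z, fd d w y * fd d z x, fd d w z * fd d x y).

Definition mstruct (X : Type) := X -> X -> X -> X -> triple.

Definition appM {X : Type} (M : mstruct X) (P : 'I_4 -> X) : triple :=
  M (P (inord 0)) (P (inord 1)) (P (inord 2)) (P (inord 3)).

Definition o4 (n : nat) : 'I_4 := inord n.

(* the Klein elements (12)(34), (13)(42), (14)(23) of S_4 (0-indexed points) *)
Definition klein (j : 'I_3) : 'S_4 :=
  match nat_of_ord j with
  | 0 => (tperm (o4 0) (o4 1) * tperm (o4 2) (o4 3))%g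
  | 1 => (tperm (o4 0) (o4 2) * tperm (o4 3) (o4 1))%g
  | _ => (tperm (o4 0) (o4 3) * tperm (o4 1) (o4 2))%g
  end.

Definition sgn_act (pi : 'S_4) (e : \bar R) : \bar R := if odd_perm pi then (- e)%E else e.

(* well-definedness of a + b - c (no +oo and -oo simultaneously) *)
Definition wd_sum (a b c : \bar R) : Prop :=
  ~ ((a = +oo%E \/ b = +oo%E \/ c = -oo%E) /\ (a = -oo%E \/ b = -oo%E \/ c = +oo%E)).

Definition gen_mobius {X : Type} (M : mstruct X) : Prop :=
  (forall P : 'I_4 -> X, admissible P -> inL4bar (appM M P)) /\
  (* (1) M(pi P) = sgn(pi) phi(pi) M(P), where (pi P)_i = P_(pi^-1 i), phi(pi) is
     the permutation j |-> j' with pi k_j pi^-1 = k_j', and S_3 permutes coordinates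
     via (sigma v)_(sigma j) = v_j *)
  (forall (P : 'I_4 -> X) (pi : 'S_4) (j j' : 'I_3), admissible P ->
     (klein j ^ pi)%g = klein j' ->
     coord (appM M (fun i => P ((pi^-1)%g i))) j' = sgn_act pi (coord (appM M P) j)) /\
  (forall P : 'I_4 -> X, admissible P -> (inL4 (appM M P) <-> nondegenerate P)) /\
  (forall x y z : X, admissible (q4 x x y z) -> M x x y z = (0%E, +oo%E, -oo%E)) /\
  (forall x y w a b : X, admissible (q5 x y w a b) -> w <> a -> a <> b -> w <> b ->
     a <> x -> x <> b -> a <> y -> y <> b ->
     let S (j : 'I_3) := (coord (M a x w b) j + coord (M a w y b) j - coord (M a x y b) j)%E in
     (exists lam : \bar R, S (inord 0) = lam /\ S (inord 1) = (- lam)%E /\ S (inord 2) = 0%E) /\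
     (x <> b -> y <> a ->
        wd_sum (coord (M a x w b) (inord 0)) (coord (M a w y b) (inord 0)) (coord (M a x y b) (inord 0))) /\
     (x <> a -> y <> b ->
        wd_sum (coord (M a x w b) (inord 1)) (coord (M a w y b) (inord 1)) (coord (M a x y b) (inord 1)))).

(* d induces M : crt = crt_d, i.e. M = Phibar o crt_d on admissible quadruples *)
Definition induces {X : Type} (d : X -> X -> \bar R) (M : mstruct X) : Prop :=
  forall P : 'I_4 -> X, admissible P ->
    appM M P = Phibar (crt_d d P).1.1 (crt_d d P).1.2 (crt_d d P).2.

(* image of crt = Phibar^-1 o M, seen in the closed simplex of R^3 (homeomorphic
   to the nonnegative part of RP^2) *)
Definition crt_image {X : Type} (M : mstruct X) : set (R * R * R) :=
  [set p | exists (P : 'I_4 -> X) (a b c : R), admissible P /\ inDeltabar a b c /\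
             Phibar a b c = appM M P /\ p = (a / (a + b + c), b / (a + b + c), c / (a + b + c))].

Definition intrinsic {X : Type} (M : mstruct X) : Prop :=
  ~ closure (crt_image M) (1, 0, 0) /\ ~ closure (crt_image M) (0, 1, 0) /\
  ~ closure (crt_image M) (0, 0, 1).

Definition intrinsic_mobius_space {X : Type} (M : mstruct X) : Prop :=
  at_least_three_points X /\ gen_mobius M /\ intrinsic M.

Definition mobius_equivalence {X X' : Type} (M : mstruct X) (M' : mstruct X') (f : X -> X') : Prop :=
  bijective f /\ forall P : 'I_4 -> X, admissible P -> appM M' (f \o P) = appM M P.

End Defs.

From HB Require Import structures.
From mathcomp Require Import all_boot all_order all_algebra all_fingroup.
From mathcomp Require Import all_classical all_reals all_analysis.
From mathcomp Require Import lra ring.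
Set Implicit Arguments. Unset Strict Implicit. Unset Printing Implicit Defensive.
Import Order.TTheory GRing.Theory Num.Theory.
Local Open Scope classical_set_scope.
Local Open Scope ring_scope.

(* The Hausdorff dimension is determined by which sets are null for the
   s-dimensional Hausdorff measures, s > 0.  Nullity passes from d1 to d2 as soon
   as X is, up to countably many points, a countable union of pieces on each of
   which small d1-balls have d2-diameter at most a constant times their radius.
   A rescaling needs a single piece.  For the involution
   d_o(x,y) = d(x,y) / (d(x,o) d(o,y)) the pieces are the regions where d(x,o)
   is bounded below (from d to d_o), resp. above (from d_o to d).  If d1 and d2
   induce the same Moebius structure their cross ratios agree, so for fixed
   p <> q we get d2(y,z) = d1(y,z) (d2(y,q)/d1(y,q)) (d2(z,p)/d1(z,p)) d1(p,q)/d2(p,q),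
   and the pieces are the regions where these conformal factors are bounded.
   Finally a Moebius equivalence pulls a quasi-metric inducing M' back to one
   inducing M with the same dimension. *)

Section MobiusHausdorff.
Variable R : realType.
Local Open Scope ereal_scope.

Lemma nneseries_pairs (u : nat -> nat -> \bar R) : (forall n i, 0 <= u n i) ->
  exists f : nat -> nat * nat, (forall p, exists k, f k = p) /\
    \sum_(0 <= k <oo) u (f k).1 (f k).2 = \sum_(0 <= n <oo) \sum_(0 <= i <oo) u n i.
Proof.
move=> u0; have /card_esym/ppcard_eqP[f] := card_nat2.
exists f; split; first by move=> p; exists (f^-1%FUN p); rewrite invK ?inE.
rewrite nneseries_esumT; last by move=> k; apply: u0.
rewrite -(reindex_esum setT setT f (fun p => u p.1 p.2)); last exact: 'bij_f.
rewrite nneseries_esumT; last by move=> n; apply: nneseries_ge0.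
rewrite (eq_esum (fun n _ => nneseries_esumT (u0 n))) /= esum_esum //.
by congr esum; apply/seteqP; split.
Qed.

Section Nullity.
Variables (X : Type) (d : X -> X -> \bar R).

Definition small_cover (s : R) (A : set X) (δ ε : R) :=
  exists c r, delta_cover d A δ c r /\ \sum_(0 <= i <oo) ((r i) `^ s)%:E <= ε%:E.

Lemma hmu_delta_ge0 (s δ : R) A : 0 <= hmu_delta d s δ A.
Proof.
apply: le_ereal_inf_tmp => _ [c [r [_ ->]]].
by apply: nneseries_ge0 => n _ _; rewrite lee_fin powR_ge0.
Qed.

Lemma hmu_eq0P s A :
  hmu d s A = 0 <-> forall δ ε : R, (0 < δ)%R -> (0 < ε)%R -> small_cover s A δ ε.
Proof.
split=> [hA δ ε δ0 ε0 | hA].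
  have : hmu_delta d s δ A < ε%:E.
    apply: (le_lt_trans _ (_ : 0 < ε%:E)); last by rewrite lte_fin.
    by rewrite -hA; apply: ereal_sup_ubound; exists δ.
  by move/ereal_inf_lt => [_ [c [r [cov ->]]] lt]; exists c, r; split => //; exact: ltW.
apply/eqP; rewrite eq_le; apply/andP; split; last first.
  apply: (le_trans (hmu_delta_ge0 s 1 A)).
  by apply: ereal_sup_ubound; exists 1%R => //=.
apply: ge_ereal_sup => _ [δ /= δ0 <-]; apply/lee_addgt0Pr => ε ε0; rewrite add0e.
have [c [r [cov le]]] := hA δ ε δ0 ε0.
by apply: le_trans le; apply: ereal_inf_lbound; exists c, r.
Qed.

Lemma hmu_eq0_subset (s : R) A B : (forall x, A x -> ~ is_infpt d x -> B x) ->
  hmu d s B = 0 -> hmu d s A = 0.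
Proof.
move=> AB /hmu_eq0P hB; apply/hmu_eq0P => δ ε δ0 ε0.
have [c [r [[rδ cov] le]]] := hB δ ε δ0 ε0.
by exists c, r; split => //; split => // y Ay ny; apply: cov => //; apply: AB.
Qed.

Lemma hmu_eq0_bigcup (s : R) (B : nat -> set X) :
  (forall n, hmu d s (B n) = 0) -> hmu d s (\bigcup_n B n) = 0.
Proof.
move=> hB; apply/hmu_eq0P => δ ε δ0 ε0.
pose εn n := (ε / (2 ^ n.+1)%:R)%R.
have : forall n, exists cr : (nat -> X) * (nat -> R), delta_cover d (B n) δ cr.1 cr.2 /\
    \sum_(0 <= i <oo) ((cr.2 i) `^ s)%:E <= (εn n)%:E.
  move=> n; have /hmu_eq0P/(_ δ (εn n) δ0) := hB n.
  by case=> [|c [r cov]]; [rewrite divr_gt0 | exists (c, r)].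
move=> /choice [cr covB].
have pow_ge0 n i : 0 <= (((cr n).2 i) `^ s)%:E by rewrite lee_fin powR_ge0.
have [f [fsurj fsum]] := nneseries_pairs pow_ge0.
exists (fun k => (cr (f k).1).1 (f k).2), (fun k => (cr (f k).1).2 (f k).2); split.
  split=> [k | y [n _ Bny] ny]; first by have [[]] := covB (f k).1.
  have [[_ cov] _] := covB n; have [i hi] := cov y Bny ny.
  by have [k fk] := fsurj (n, i); exists k; rewrite fk.
rewrite fsum; apply: le_trans (epsilon_trick0 _ (ltW ε0)).
by apply: lee_nneseries => [n _ _|n _]; [apply: nneseries_ge0 | apply: (covB n).2].
Qed.

Lemma hmu_eq0_setU (s : R) A B : hmu d s A = 0 -> hmu d s B = 0 -> hmu d s (A `|` B) = 0.
Proof.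
move=> hA hB; have -> : A `|` B = \bigcup_n (if n is 0%N then A else B).
  apply/seteqP; split=> [x [Ax|Bx] | x [[|n] _ /= ?]]; [by exists 0%N | | by left | by right].
  by exists 1%N.
by apply: hmu_eq0_bigcup => -[|n].
Qed.

Lemma hmu_set1 (s : R) x : (0 < s)%R -> d x x = 0 -> hmu d s [set x] = 0.
Proof.
move=> s0 dxx; apply/hmu_eq0P => δ ε δ0 ε0; exists (fun=> x), (fun=> 0%R); split.
  by split=> [_ | y -> _]; [rewrite lexx ltW | exists 0%N; rewrite dxx].
by rewrite eseries0 ?lee_fin ?ltW // => i _ _; rewrite powR0 ?gt_eqF.
Qed.

Lemma hmu0_neq0 : (exists x, ~ is_infpt d x) -> hmu d 0 setT <> 0.
Proof.
move=> [x nx] /hmu_eq0P /(_ 1%R (1/2)%R ltr01) [|c [r [[_ cov] le]]].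
  by rewrite divr_gt0.
have [i _] := cov x I nx.
have : ((r i) `^ 0)%:E <= (1/2)%:E.
  apply: le_trans le; apply: le_trans (nneseries_lim_ge i.+1 _); last first.
    by move=> n _ _; rewrite lee_fin powR_ge0.
  rewrite big_nat_recr //=; apply: leeDr.
  by apply: sume_ge0 => n _; rewrite lee_fin powR_ge0.
by rewrite powRr0 lee_fin ler_pdivlMr // mul1r; lra.
Qed.

Lemma hmu_eq0_countable (s : R) (e : nat -> X) : (0 < s)%R -> (forall x, d x x = 0) ->
  (forall x, ~ is_infpt d x -> exists j, x = e j) -> hmu d s setT = 0.
Proof.
move=> s0 dxx cover; apply: (@hmu_eq0_subset _ _ (\bigcup_j [set e j])).
  by move=> x _ /cover [j ->]; exists j.
by apply: hmu_eq0_bigcup => j; apply: hmu_set1.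
Qed.

End Nullity.

Lemma hausdorff_dim_eq {X : Type} (d1 d2 : X -> X -> \bar R) :
  (exists x, ~ is_infpt d1 x) -> (exists x, ~ is_infpt d2 x) ->
  (forall s, (0 < s)%R -> hmu d1 s setT = 0 <-> hmu d2 s setT = 0) ->
  hausdorff_dim d1 = hausdorff_dim d2.
Proof.
move=> n1 n2 h12; rewrite /hausdorff_dim; congr ereal_inf; congr image.
apply/funext => s; apply/propext; rewrite /=.
have [-> | s_neq0] := eqVneq s 0%R.
  by split=> -[_ h0]; [have := hmu0_neq0 n1 | have := hmu0_neq0 n2].
split=> -[s0 hs]; split => //; apply/(h12 s); rewrite // lt_neqAle eq_sym s_neq0 //.
Qed.

Section Transfer.
Variables (X : Type) (d1 d2 : X -> X -> \bar R).

Lemma hmu_eq0_lipschitz (s : R) (A : set X) (C ρ : R) : (0 < C)%R -> (0 < ρ)%R ->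
  (forall x, A x -> ~ is_infpt d1 x) ->
  (forall c y z (r : R), A y -> A z -> (0 <= r <= ρ)%R ->
     d1 c y <= r%:E -> d1 c z <= r%:E -> d2 y z <= (C * r)%:E) ->
  hmu d1 s A = 0 -> hmu d2 s A = 0.
Proof.
move=> C0 ρ0 A1 lip /hmu_eq0P h1; apply/hmu_eq0P => δ ε δ0 ε0.
have δ'0 : (0 < Order.min (δ / C) ρ)%R by rewrite lt_min !divr_gt0.
have ε'0 : (0 < ε / C `^ s)%R by rewrite divr_gt0 ?powR_gt0.
have [c [r [[rδ cov] le]]] := h1 _ _ δ'0 ε'0.
(* Recentre each d1-ball meeting A at a point of A: its trace on A then lies in
   the d2-ball of radius C r. *)
have : forall i, exists y, (exists2 y', A y' & d1 (c i) y' <= (r i)%:E) ->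
    A y /\ d1 (c i) y <= (r i)%:E.
  move=> i.
  have [[y' Ay' hy'] | none] := pselect (exists2 y', A y' & d1 (c i) y' <= (r i)%:E).
    by exists y'.
  by exists (c i) => /none.
move=> /choice [Y HY]; exists Y, (fun i => C * r i)%R; split.
  split=> [i | y Ay _].
    have [r0] := rδ i; rewrite le_min => /andP[rC _].
    by rewrite mulr_ge0 ?(ltW C0) //= mulrC -ler_pdivlMr.
  have [i hi] := cov y Ay (A1 y Ay); exists i.
  have [AY hY] := HY i (ex_intro2 _ _ y Ay hi).
  have [r0] := rδ i; rewrite le_min => /andP[_ rρ].
  by apply: lip hY hi; rewrite // r0.
rewrite (eq_eseriesr (g := fun i => (C `^ s)%:E * ((r i) `^ s)%:E)); last first.
  by move=> i _; have [r0 _] := rδ i; rewrite -EFinM powRM // ltW.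
rewrite nneseriesZl; last by move=> i _; rewrite lee_fin powR_ge0.
apply: le_trans (lee_wpmul2l _ le) _; first by rewrite lee_fin powR_ge0.
by rewrite -EFinM lee_fin mulrC divfK ?gt_eqF ?powR_gt0.
Qed.

Lemma hmu_eq0_transfer (s : R) (A : nat -> set X) (C ρ : nat -> R) (e : nat -> X) :
  (0 < s)%R -> (forall x, d2 x x = 0) ->
  (forall N, 0 < C N)%R -> (forall N, 0 < ρ N)%R ->
  (forall x, ~ is_infpt d2 x -> (exists N, A N x) \/ (exists j, x = e j)) ->
  (forall N x, A N x -> ~ is_infpt d1 x) ->
  (forall N c y z (r : R), A N y -> A N z -> (0 <= r <= ρ N)%R ->
      d1 c y <= r%:E -> d1 c z <= r%:E -> d2 y z <= (C N * r)%:E) ->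
  hmu d1 s setT = 0 -> hmu d2 s setT = 0.
Proof.
move=> s0 d2xx C0 ρ0 cover A1 lip h1.
apply: (@hmu_eq0_subset _ _ _ _ ((\bigcup_N A N) `|` \bigcup_j [set e j])).
  by move=> x _ /cover [[N ANx] | [j ->]]; [left; exists N | right; exists j].
apply: hmu_eq0_setU; apply: hmu_eq0_bigcup => N; last exact: hmu_set1.
apply: hmu_eq0_lipschitz (C0 N) (ρ0 N) (A1 N) (lip N) _.
exact: hmu_eq0_subset h1.
Qed.

End Transfer.


Lemma three_points_avoid (X : Type) : at_least_three_points X ->
  forall a b : X, exists y, y <> a /\ y <> b.
Proof.
move=> [x [y [z [xy [yz xz]]]]] a b; apply: contrapT => none.
have ab u : u = a \/ u = b.
  by apply: contrapT => /not_orP [ua ub]; apply: none; exists u.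
by move: xy yz xz; case: (ab x) (ab y) (ab z) => -> [] -> [] ->.
Qed.

Section QuasiMetric.
Variables (X : Type) (d : X -> X -> \bar R).
Hypothesis qm : quasi_metric d.

Lemma qm_sym x y : d x y = d y x.
Proof. by case: qm => [[[]|[]]]. Qed.

Lemma qm_eq0 x y : d x y = 0 <-> x = y.
Proof. by case: qm => [[[_ []]|[_ []]]]. Qed.

Lemma qm_ge0 x y : 0 <= d x y.
Proof. by case: qm => [[[_ [_ []]]|[_ [_ []]]]]. Qed.

Lemma qm_xx x : d x x = 0.
Proof. exact/qm_eq0. Qed.

Lemma qm_finE x y : ~ is_infpt d x -> ~ is_infpt d y -> d x y = (fine (d x y))%:E.
Proof.
move=> hx hy; rewrite fineK // ge0_fin_numE ?qm_ge0 //.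
case: qm => [[[_ [_ [_ fin]]] | [_ [_ [_ [inf [infP [finP _]]]]]]] _]; first exact: fin.
by apply: finP => xy; [apply: hx | apply: hy]; rewrite xy; apply: infP.
Qed.

Lemma qm_fine_gt0 x y : ~ is_infpt d x -> ~ is_infpt d y -> x <> y -> (0 < fine (d x y))%R.
Proof.
move=> hx hy xy; rewrite lt_neqAle fine_ge0 ?qm_ge0 // andbT.
by apply/eqP => dxy; apply: xy; apply/qm_eq0; rewrite qm_finE // -dxy.
Qed.

Lemma qm_ball_le (K : R) : K_quasi_ineq K d -> (0 <= K)%R ->
  forall c y z (r : R), d c y <= r%:E -> d c z <= r%:E -> d y z <= (K * r)%:E.
Proof.
move=> HK K0 c y z r cy cz; apply: le_trans (HK y z c) _.
by rewrite EFinM lee_wpmul2l ?lee_fin // ge_max qm_sym cy cz.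
Qed.

Lemma qm_fine_le (K : R) : K_quasi_ineq K d -> forall a b c,
  ~ is_infpt d a -> ~ is_infpt d b -> ~ is_infpt d c ->
  (fine (d a b) <= K * Num.max (fine (d a c)) (fine (d c b)))%R.
Proof.
move=> HK a b c ha hb hc; have := HK a b c.
by rewrite (qm_finE ha hb) (qm_finE ha hc) (qm_finE hc hb) -EFin_max -EFinM lee_fin.
Qed.

Hypothesis three : at_least_three_points X.

Lemma qm_infpt_uniq a b : is_infpt d a -> is_infpt d b -> a = b.
Proof.
move=> ha hb; case: qm => [[[_ [_ [_ fin]]] | [_ [_ [_ [inf [_ [_ uniq]]]]]]] _].
  have [u [ua _]] := three_points_avoid three a a.
  by have := fin u a; rewrite ha // ltxx.
by rewrite (uniq a ha) (uniq b hb).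
Qed.

Lemma qm_infpt_pick : exists i, forall x, is_infpt d x -> x = i.
Proof.
have [[a ha] | none] := pselect (exists a, is_infpt d a).
  by exists a => x hx; apply: qm_infpt_uniq.
have [x _] := three.
by exists x => y hy; case: none; exists y.
Qed.

Lemma qm_exists_finite : exists x, ~ is_infpt d x.
Proof.
have [i hi] := qm_infpt_pick; have [x [xi _]] := three_points_avoid three i i.
by exists x => /hi.
Qed.

End QuasiMetric.

Section Rescale.
Variables (X : Type) (d : X -> X -> \bar R) (lam : R).
Hypotheses (qm : quasi_metric d) (three : at_least_three_points X) (lam0 : (0 < lam)%R).

Lemma rescale_infpt x : is_infpt (rescale lam d) x <-> is_infpt d x.
Proof.
split=> h y yx; last by rewrite /rescale h // gt0_muley ?lte_fin.
by have := h y yx; rewrite /rescale; case: (d y x) => //=; rewrite gt0_muleNy ?lte_fin.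
Qed.

Lemma hausdorff_dim_rescale : hausdorff_dim d = hausdorff_dim (rescale lam d).
Proof.
have [x0 fin_x0] := qm_exists_finite qm three.
have [K [K1 HK]] := qm.2; have K0 : (0 < K)%R by apply: lt_le_trans K1.
pose Fin := fun _ : nat => [set x | ~ is_infpt d x].
apply: hausdorff_dim_eq => [|| s s0]; [by exists x0 | by exists x0; rewrite rescale_infpt |].
split.
  apply: (hmu_eq0_transfer (A := Fin) (C := fun=> (lam * K)%R) (ρ := fun=> 1%R)
    (e := fun=> x0) s0) => //.
  - by move=> x; rewrite /rescale qm_xx // mule0.
  - by move=> _; rewrite mulr_gt0.
  - by move=> x; rewrite rescale_infpt; left; exists 0%N.
  - move=> _ c y z r _ _ _ cy cz; rewrite /rescale -mulrA EFinM.
    rewrite lee_wpmul2l ?lee_fin ?(ltW lam0) //.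
    exact: (qm_ball_le qm HK (ltW K0) cy cz).
apply: (hmu_eq0_transfer (A := Fin) (C := fun=> (K / lam)%R) (ρ := fun=> 1%R)
  (e := fun=> x0) s0) => //.
- exact: qm_xx.
- by move=> _; rewrite divr_gt0.
- by move=> x; left; exists 0%N.
- by move=> _ x /= /rescale_infpt.
- move=> _ c y z r _ _ _ cy cz; rewrite mulrAC -mulrA.
  by apply: (qm_ball_le qm HK (ltW K0) (c := c)); rewrite EFinM lee_pdivlMr // muleC.
Qed.

End Rescale.

Lemma ediv_fin (a b : \bar R) : b <> 0 -> ediv a b = (fine a / fine b)%:E.
Proof. by move=> b0; rewrite /ediv ifN //; apply/eqP. Qed.

Section Involution.
Variables (X : Type) (d : X -> X -> \bar R) (o : X).
Hypotheses (qm : quasi_metric d) (three : at_least_three_points X) (fin_o : ~ is_infpt d o).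

Let I := involution d o.
Let δ x y := fine (d x y).

Lemma involution_xx x : I x x = 0.
Proof. by rewrite /I /involution asboolT. Qed.

Lemma involution_finE y z : ~ is_infpt d y -> ~ is_infpt d z -> y <> z -> y <> o -> z <> o ->
  I y z = (δ y z / (δ y o * δ o z))%:E.
Proof.
move=> fin_y fin_z yz yo zo; rewrite /I /involution !asboolF //.
rewrite (qm_finE qm fin_y fin_o) (qm_finE qm fin_o fin_z) -EFinM ediv_fin //.
by case=> /eqP; rewrite mulf_eq0 !gt_eqF ?qm_fine_gt0 // => oz; apply: zo.
Qed.

Lemma involution_infptE c y : is_infpt d c -> y <> c -> y <> o -> ~ is_infpt d y ->
  I c y = (δ o y)^-1%:E.
Proof.
move=> inf_c yc yo fin_y; rewrite /I /involution asboolF => [|cy]; last exact: yc.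
rewrite asboolT // (qm_finE qm fin_o fin_y) ediv_fin ?div1r //.
by case=> /eqP; rewrite gt_eqF ?qm_fine_gt0 // => oy; apply: yo.
Qed.

Lemma involution_o x : x <> o -> I o x = +oo.
Proof.
move=> xo; rewrite /I /involution asboolF => [|ox]; last exact: xo.
rewrite asboolF // /ediv qm_xx //; case: (pselect (is_infpt d x)) => fin_x.
  by rewrite asboolT // eqxx.
by rewrite asboolF // mul0e eqxx.
Qed.

Lemma involution_neq_pinfty x y : x <> o -> y <> o -> I x y <> +oo.
Proof.
move=> xo yo; have dxo : d x o <> 0 by move/(qm_eq0 qm).
have doy : d o y <> 0 by move/(qm_eq0 qm) => oy; apply: yo.
rewrite /I /involution; case: ifPn => // _.
case: ifPn => _; first by rewrite ediv_fin.
case: ifPn => _; first by rewrite ediv_fin.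
rewrite ediv_fin // => /eqP; rewrite mule_eq0.
by case/orP => /eqP.
Qed.

Lemma involution_infpt x : is_infpt I x -> x = o.
Proof.
move=> inf_x; apply: contrapT => xo.
have [y [yx yo]] := three_points_avoid three x o.
exact: involution_neq_pinfty yo xo (inf_x y yx).
Qed.

Lemma involution_le (n : R) y z : ~ is_infpt d y -> ~ is_infpt d z -> y <> o -> z <> o ->
  (1 <= n * δ y o)%R -> (1 <= n * δ z o)%R -> I y z <= (n ^+ 2 * δ y z)%:E.
Proof.
move=> fin_y fin_z yo zo ny nz; have [<- | yz] := pselect (y = z).
  by rewrite involution_xx lee_fin mulr_ge0 ?sqr_ge0 ?fine_ge0 ?qm_ge0.
have oz : o <> z by move=> oz; apply: zo.
rewrite involution_finE // lee_fin ler_pdivrMr ?mulr_gt0 ?qm_fine_gt0 //.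
have -> : (n ^+ 2 * δ y z * (δ y o * δ o z) = δ y z * ((n * δ y o) * (n * δ z o)))%R.
  by rewrite /δ (qm_sym qm z o); ring.
by apply: ler_peMr; [exact/fine_ge0/qm_ge0 | exact: mulr_ege1].
Qed.

Lemma involution_ball (K n r : R) c y : K_quasi_ineq K d -> (1 <= K)%R -> (0 <= r)%R ->
  (2 * K * n * r <= 1)%R -> ~ is_infpt d y -> y <> o -> (δ y o <= n)%R ->
  I c y <= r%:E -> d c y <= (K * n ^+ 2 * r)%:E.
Proof.
move=> HK K1 r0 small fin_y yo yn Icy.
have K0 : (0 <= K)%R := le_trans ler01 K1.
have oy : o <> y by move=> oy; apply: yo.
have oy0 : (0 < δ o y)%R by rewrite qm_fine_gt0.
have oyn : (δ o y <= n)%R by rewrite /δ qm_sym.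
have [<- | cy] := pselect (c = y).
  by rewrite (qm_xx qm) lee_fin mulr_ge0 // mulr_ge0 // sqr_ge0.
have yc : y <> c by move=> yc; apply: cy.
have [co | co] := pselect (c = o); first by move: Icy; rewrite co involution_o.
have [inf_c | fin_c] := pselect (is_infpt d c).
  move: Icy; rewrite involution_infptE // lee_fin => ry.
  have rn : (1 <= r * n)%R.
    apply: le_trans (_ : r * δ o y <= r * n)%R; last by rewrite ler_wpM2l.
    by rewrite -ler_pdivrMr // div1r.
  by exfalso; nra.
move: Icy; rewrite involution_finE //.
rewrite (qm_finE qm fin_c fin_y) !lee_fin ler_pdivrMr ?mulr_gt0 ?qm_fine_gt0 // -/(δ c y).
move=> ryo; have cy0 : (0 < δ c y)%R by rewrite qm_fine_gt0.
have co_le := qm_fine_le qm HK fin_c fin_o fin_y.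
have [ycy | cyy] := leP (δ y o) (δ c y).
  have : (δ c y <= δ c y * (r * K * n))%R.
    apply: le_trans ryo _; rewrite [leRHS](_ : _ = r * ((K * δ c y) * n))%R; last by ring.
    by rewrite ler_wpM2l // ler_pM ?fine_ge0 ?qm_ge0 // -(max_l ycy).
  rewrite -{1}[δ c y]mulr1 ler_pM2l // => rKn.
  by exfalso; lra.
apply: le_trans ryo _; rewrite [leRHS](_ : _ = r * ((K * n) * n))%R; last by ring.
rewrite ler_wpM2l // ler_pM ?fine_ge0 ?qm_ge0 //.
by apply: (le_trans co_le); rewrite ler_wpM2l // max_r // ltW.
Qed.

Lemma hmu_eq0_to_involution (s : R) : (0 < s)%R -> hmu d s setT = 0 -> hmu I s setT = 0.
Proof.
move=> s0; have [K [K1 HK]] := qm.2; have K0 : (0 < K)%R := lt_le_trans ltr01 K1.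
have [i inf_i] := qm_infpt_pick qm three.
pose A N := [set x | ~ is_infpt d x /\ x <> o /\ (1 <= N.+1%:R * δ x o)%R].
apply: (hmu_eq0_transfer (A := A) (C := fun N => (K * N.+1%:R ^+ 2)%R) (ρ := fun=> 1%R)
  (e := fun j => if j is 0%N then o else i) s0) => //.
- exact: involution_xx.
- by move=> N; rewrite mulr_gt0 // exprn_gt0.
- move=> x _; have [/inf_i -> | fin_x] := pselect (is_infpt d x); first by right; exists 1%N.
  have [-> | xo] := pselect (x = o); first by right; exists 0%N.
  left; exists (Num.trunc (δ x o)^-1); split => //; split => //.
  by rewrite -ler_pdivrMr ?qm_fine_gt0 // div1r ltW // truncnS_gt.
- by move=> N x [].
- move=> N c y z r [fin_y [yo Ny]] [fin_z [zo Nz]] _ cy cz.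
  apply: le_trans (involution_le fin_y fin_z yo zo Ny Nz) _.
  have := qm_ball_le qm HK (ltW K0) cy cz; rewrite (qm_finE qm fin_y fin_z) !lee_fin.
  move=> dyz; rewrite [leRHS](_ : _ = N.+1%:R ^+ 2 * (K * r))%R; last by ring.
  by rewrite ler_pM2l // exprn_gt0.
Qed.

Lemma hmu_eq0_of_involution (s : R) : (0 < s)%R -> hmu I s setT = 0 -> hmu d s setT = 0.
Proof.
move=> s0; have [K [K1 HK]] := qm.2; have K0 : (0 < K)%R := lt_le_trans ltr01 K1.
pose A N := [set x | ~ is_infpt d x /\ x <> o /\ (δ x o <= N.+1%:R)%R].
apply: (hmu_eq0_transfer (A := A) (C := fun N => (K * (K * N.+1%:R ^+ 2))%R)
  (ρ := fun N => (2 * K * N.+1%:R)^-1%R) (e := fun=> o) s0) => //.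
- exact: qm_xx.
- by move=> N; rewrite !mulr_gt0 // exprn_gt0.
- by move=> N; rewrite invr_gt0 !mulr_gt0.
- move=> x fin_x; have [-> | xo] := pselect (x = o); first by right; exists 0%N.
  by left; exists (Num.trunc (δ x o)); split => //; split => //; rewrite ltW // truncnS_gt.
- by move=> N x [_ [xo _]] /involution_infpt.
- move=> N c y z r [fin_y [yo Ny]] [fin_z [zo Nz]] /andP[r0 rρ] cy cz.
  have small : (2 * K * N.+1%:R * r <= 1)%R.
    by rewrite mulrC -ler_pdivlMr ?mulr_gt0 // div1r.
  have ball u := involution_ball (c := c) (y := u) HK K1 r0 small.
  rewrite -mulrA; apply: (qm_ball_le qm HK (ltW K0)).
  - exact: ball y fin_y yo Ny cy.
  - exact: ball z fin_z zo Nz cz.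
Qed.

Lemma hausdorff_dim_involution : hausdorff_dim d = hausdorff_dim I.
Proof.
apply: hausdorff_dim_eq => [|| s s0]; first exact: qm_exists_finite.
  have [y [yo _]] := three_points_avoid three o o.
  by exists y => /involution_infpt.
by split; [apply: hmu_eq0_to_involution | apply: hmu_eq0_of_involution].
Qed.

End Involution.

Lemma q4_inj (X : Type) (a b c e : X) :
  a <> b -> a <> c -> a <> e -> b <> c -> b <> e -> c <> e -> injective (q4 a b c e).
Proof.
move=> ab ac ae bc be ce [i hi] [j hj]; rewrite /q4 /= => h; apply: val_inj => /=.
by move: hi hj h; case: i => [|[|[|[|i]]]]; case: j => [|[|[|[|j]]]] //=; congruence.
Qed.

Lemma inj_admissible (X : Type) (n : nat) (P : 'I_n -> X) : injective P -> admissible P.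
Proof. by move=> inj i j k ij _ _ [/inj eq_ij _]; move: ij; rewrite eq_ij eqxx. Qed.

Lemma crt_d_q4 (X : Type) (d : X -> X -> \bar R) a b c e :
  crt_d d (q4 a b c e) = (fd d a b * fd d c e, fd d a c * fd d e b, fd d a e * fd d b c)%R.
Proof. by rewrite /crt_d /q4 /= !inordK. Qed.

Lemma fd_finE (X : Type) (d : X -> X -> \bar R) x y : x <> y ->
  ~ is_infpt d x -> ~ is_infpt d y -> fd d x y = fine (d x y).
Proof. by move=> xy fin_x fin_y; rewrite /fd asboolF // => -[_ []]. Qed.

Lemma Phibar_eq_ratio (a b c a' b' c' : R) :
  (0 < a)%R -> (0 < b)%R -> (0 < c)%R -> (0 < a')%R -> (0 < b')%R -> (0 < c')%R ->
  Phibar a b c = Phibar a' b' c' -> (c / a = c' / a')%R.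
Proof.
move=> a0 b0 c0 a'0 b'0 c'0; rewrite /Phibar !gt_eqF // => -[_ ln_eq _].
by apply: (ln_inj _ _ ln_eq); rewrite posrE divr_gt0.
Qed.

Section Conformal.
Variables (X : Type) (M : mstruct R X) (d1 d2 : X -> X -> \bar R).
Hypotheses (qm1 : quasi_metric d1) (qm2 : quasi_metric d2) (three : at_least_three_points X).
Hypotheses (ind1 : induces d1 M) (ind2 : induces d2 M).

Let δ1 x y := fine (d1 x y).
Let δ2 x y := fine (d2 x y).
Let good x := ~ is_infpt d1 x /\ ~ is_infpt d2 x.

Lemma good_dist_gt0 u v : good u -> good v -> u <> v -> (0 < δ1 u v)%R /\ (0 < δ2 u v)%R.
Proof. by move=> [u1 u2] [v1 v2] uv; rewrite !qm_fine_gt0. Qed.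

Lemma induces_cross_ratio y z p q : good y -> good z -> good p -> good q ->
  y <> z -> y <> p -> y <> q -> z <> p -> z <> q -> p <> q ->
  (δ2 y z * δ2 p q * (δ1 y q * δ1 z p) = δ1 y z * δ1 p q * (δ2 y q * δ2 z p))%R.
Proof.
move=> [y1 y2] [z1 z2] [p1 p2] [q1 q2] yz yp yq zp zq pq.
have qz : q <> z by move=> qz; apply: zq.
have gt1 := qm_fine_gt0 qm1.
have gt2 := qm_fine_gt0 qm2.
have adm := inj_admissible (q4_inj yz yp yq zp zq pq).
have := etrans (esym (ind1 adm)) (ind2 adm); rewrite !crt_d_q4 /= !fd_finE //.
move/Phibar_eq_ratio; rewrite !mulr_gt0 ?gt1 ?gt2 // => /(_ isT isT isT isT isT isT) /eqP.
have n1 : (δ1 y z * δ1 p q != 0)%R by rewrite gt_eqF // mulr_gt0 ?gt1.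
have n2 : (δ2 y z * δ2 p q != 0)%R by rewrite gt_eqF // mulr_gt0 ?gt2.
by rewrite eqr_div // => /eqP eq12; rewrite /δ1 /δ2 mulrC eq12 mulrC.
Qed.

Lemma conformal_le (n : R) p q y z : good p -> good q -> good y -> good z -> p <> q ->
  y <> p -> y <> q -> z <> p -> z <> q ->
  (δ2 y q <= n * δ1 y q)%R -> (δ2 z p <= n * δ1 z p)%R ->
  (δ2 y z <= n ^+ 2 * (δ1 p q / δ2 p q) * δ1 y z)%R.
Proof.
move=> gp gq gy gz pq yp yq zp zq yn zn.
have [<- | yz] := pselect (y = z); first by rewrite /δ1 /δ2 (qm_xx qm1) (qm_xx qm2) mulr0.
have [pq1 pq2] := good_dist_gt0 gp gq pq.
have [yq1 _] := good_dist_gt0 gy gq yq.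
have [zp1 _] := good_dist_gt0 gz gp zp.
rewrite -(ler_pM2r (mulr_gt0 pq2 (mulr_gt0 yq1 zp1))) mulrA.
rewrite (induces_cross_ratio gy gz gp gq yz yp yq zp zq pq).
rewrite [leRHS](_ : _ = δ1 y z * δ1 p q * ((n * δ1 y q) * (n * δ1 z p)))%R; last first.
  by field; rewrite gt_eqF.
rewrite ler_wpM2l ?mulr_ge0 ?fine_ge0 ?qm_ge0 // ler_pM ?fine_ge0 ?qm_ge0 //.
Qed.

Lemma hmu_eq0_conformal (s : R) : (0 < s)%R -> hmu d1 s setT = 0 -> hmu d2 s setT = 0.
Proof.
move=> s0 h1; have [i inf_i] := qm_infpt_pick qm1 three.
have [[p [q [gp [gq pq]]]] | few] := pselect (exists p q, good p /\ good q /\ p <> q); last first.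
  have [g all_g] : exists g, forall x, good x -> x = g.
    have [[g gg] | none] := pselect (exists g, good g).
      by exists g => x gx; apply: contrapT => xg; apply: few; exists x, g.
    by exists i => x gx; case: none; exists x.
  apply: (hmu_eq0_countable (e := fun j => if j is 0%N then g else i) s0 (qm_xx qm2)).
  move=> x fin2_x; have [/inf_i -> | fin1_x] := pselect (is_infpt d1 x); first by exists 1%N.
  by exists 0%N; apply: all_g.
have [K [K1 HK]] := qm1.2; have K0 : (0 < K)%R := lt_le_trans ltr01 K1.
pose κ := (δ1 p q / δ2 p q)%R.
have κ0 : (0 < κ)%R by have [pq1 pq2] := good_dist_gt0 gp gq pq; rewrite divr_gt0.
pose A N := [set x | good x /\ x <> p /\ x <> q /\
  (δ2 x q <= N.+1%:R * δ1 x q)%R /\ (δ2 x p <= N.+1%:R * δ1 x p)%R].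
apply: (hmu_eq0_transfer (A := A) (C := fun N => (N.+1%:R ^+ 2 * κ * K)%R) (ρ := fun=> 1%R)
  (e := fun j => match j with 0 => p | 1 => q | _ => i end) s0 _ _ _ _ _ _ h1) => //.
- exact: qm_xx.
- by move=> N; rewrite mulr_gt0 // mulr_gt0 // exprn_gt0.
- move=> x fin2_x; have [/inf_i -> | fin1_x] := pselect (is_infpt d1 x).
    by right; exists 2%N.
  have [-> | xp] := pselect (x = p); first by right; exists 0%N.
  have [-> | xq] := pselect (x = q); first by right; exists 1%N.
  pose t := Num.max (δ2 x q / δ1 x q)%R (δ2 x p / δ1 x p)%R.
  have below u : good u -> x <> u -> (δ2 x u / δ1 x u <= t)%R ->
      (δ2 x u <= (Num.trunc t).+1%:R * δ1 x u)%R.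
    move=> gu xu le_t; have gx : good x by [].
    rewrite -ler_pdivrMr; last exact: (good_dist_gt0 gx gu xu).1.
    exact: le_trans le_t (ltW (truncnS_gt t)).
  by left; exists (Num.trunc t); do !split => //; apply: below; rewrite // le_max lexx ?orbT.
- by move=> N x [[]].
- move=> N c y z r [gy [yp [yq [yn _]]]] [gz [zp [zq [_ zn]]]] _ cy cz.
  have := qm_ball_le qm1 HK (ltW K0) cy cz.
  rewrite (qm_finE qm1 gy.1 gz.1) (qm_finE qm2 gy.2 gz.2) !lee_fin => dyz.
  apply: le_trans (conformal_le gp gq gy gz pq yp yq zp zq yn zn) _.
  by rewrite -[leRHS]mulrA; apply: ler_wpM2l; rewrite // mulr_ge0 // ?exprn_ge0 // ltW.
Qed.

End Conformal.

Lemma hausdorff_dim_conformal (X : Type) (M : mstruct R X) (d1 d2 : X -> X -> \bar R) :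
  quasi_metric d1 -> quasi_metric d2 -> at_least_three_points X ->
  induces d1 M -> induces d2 M -> hausdorff_dim d1 = hausdorff_dim d2.
Proof.
move=> qm1 qm2 three ind1 ind2.
apply: hausdorff_dim_eq => [|| s s0]; [exact: qm_exists_finite | exact: qm_exists_finite |].
by split; [exact: (hmu_eq0_conformal qm1 qm2 three ind1 ind2 s0) |
  exact: (hmu_eq0_conformal qm2 qm1 three ind2 ind1 s0)].
Qed.

Definition pullback_dist (X X' : Type) (f : X -> X') (d' : X' -> X' -> \bar R) :=
  fun x y => d' (f x) (f y).

Section Pullback.
Variables (X X' : Type) (f : X -> X') (d' : X' -> X' -> \bar R).
Hypothesis fb : bijective f.
Let d := pullback_dist f d'.

Lemma pullback_infpt x : is_infpt d x <-> is_infpt d' (f x).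
Proof.
have [g fK gK] := fb.
split=> inf_x y yx; first by rewrite -(gK y); apply: inf_x => gy; apply: yx; rewrite -gy gK.
by apply: inf_x => fy; apply: yx; rewrite -(fK y) fy fK.
Qed.

Lemma pullback_quasi_metric : quasi_metric d' -> quasi_metric d.
Proof.
have [g fK gK] := fb; have f_inj := can_inj fK.
move=> [sm [K [K1 HK]]]; split; last by exists K; split => // x y z; apply: HK.
have eq0 (d'0 : forall x y, d' x y = 0 <-> x = y) x y : d x y = 0 <-> x = y.
  by rewrite /d /pullback_dist d'0; split => [/f_inj | ->].
case: sm => [[sym [d'0 [ge0 fin]]] | [sym [d'0 [ge0 [inf [infP [finP uniq]]]]]]].
  left; split; first by move=> x y; apply: sym.
  by split; [exact: eq0 | split => x y; [apply: ge0 | apply: fin]].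
right; split; first by move=> x y; apply: sym.
split; first exact: eq0.
split; first by move=> x y; apply: ge0.
have neq x : x <> g inf -> f x <> inf by move=> xi fx; apply: xi; rewrite -fx fK.
exists (g inf); split; first by move=> x /neq xi; rewrite /d /pullback_dist gK; apply: infP.
split; first by move=> x y /neq xi /neq yi; apply: finP.
by move=> p /pullback_infpt /uniq <-; rewrite fK.
Qed.

Lemma pullback_induces (M : mstruct R X) (M' : mstruct R X') :
  mobius_equivalence M M' f -> induces d' M' -> induces d M.
Proof.
move=> [_ Mf] ind P adm; have f_inj := bij_inj fb.
have adm' : admissible (f \o P).
  by move=> i j k ij jk ik [/f_inj e1 /f_inj e2]; apply: (adm i j k ij jk ik).
have fdE a b : fd d' (f a) (f b) = fd d a b.
  rewrite /fd (_ : (f a <> f b /\ _) = (a <> b /\ (is_infpt d a \/ is_infpt d b))) //.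
  apply/propext; rewrite !pullback_infpt.
  by split=> -[ab inf]; split => //; [move=> eq_ab; apply: ab; rewrite eq_ab | move/f_inj].
by rewrite -(Mf P adm) (ind _ adm') /crt_d /= !fdE.
Qed.

Lemma pullback_delta_cover (δ : R) c r :
  delta_cover d setT δ c r <-> delta_cover d' setT δ (f \o c) r.
Proof.
have [g fK gK] := fb.
split=> -[rδ cov]; split => // y _ fin_y.
  have [|i] := cov (g y) I; first by rewrite pullback_infpt gK.
  by rewrite /d /pullback_dist gK; exists i.
by have [|i] := cov (f y) I; [rewrite -pullback_infpt | exists i].
Qed.

Lemma hausdorff_dim_pullback : hausdorff_dim d = hausdorff_dim d'.
Proof.
have [g fK gK] := fb.
have hd (s δ : R) : hmu_delta d s δ setT = hmu_delta d' s δ setT.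
  rewrite /hmu_delta; congr ereal_inf; apply/seteqP; split => _ [c [r [cov ->]]].
    by exists (f \o c), r; split => //; apply/pullback_delta_cover.
  exists (g \o c), r; split => //; apply/pullback_delta_cover.
  by rewrite (_ : f \o (g \o c) = c) //; apply/funext => i /=; rewrite gK.
have hh (s : R) : hmu d s setT = hmu d' s setT.
  by rewrite /hmu; congr ereal_sup; congr image; apply/funext => δ; exact: hd.
by rewrite /hausdorff_dim; congr ereal_inf; congr image; apply/funext => s /=; rewrite hh.
Qed.

End Pullback.

End MobiusHausdorff.

Theorem theorem1p1 (R : realType) (X X' : Type) :
  (forall (M : mstruct R X) (d : X -> X -> \bar R),
     intrinsic_mobius_space M -> quasi_metric d -> induces d M ->
     (forall lam : R, 0 < lam -> hausdorff_dim d = hausdorff_dim (rescale lam d)) /\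
     (forall o : X, ~ is_infpt d o -> hausdorff_dim d = hausdorff_dim (involution d o)))
  /\
  (forall (M : mstruct R X) (d1 d2 : X -> X -> \bar R),
     intrinsic_mobius_space M -> quasi_metric d1 -> quasi_metric d2 ->
     induces d1 M -> induces d2 M -> hausdorff_dim d1 = hausdorff_dim d2)
  /\
  (forall (M : mstruct R X) (M' : mstruct R X') (f : X -> X')
          (d : X -> X -> \bar R) (d' : X' -> X' -> \bar R),
     intrinsic_mobius_space M -> intrinsic_mobius_space M' ->
     mobius_equivalence M M' f ->
     quasi_metric d -> induces d M -> quasi_metric d' -> induces d' M' ->
     hausdorff_dim d = hausdorff_dim d').
Proof.
split; [|split].
- move=> M d [three _] qm _; split => [lam lam0 | o fin_o].
    exact: hausdorff_dim_rescale.
  exact: hausdorff_dim_involution.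
- by move=> M d1 d2 [three _] qm1 qm2; apply: hausdorff_dim_conformal.
- move=> M M' f d d' [three _] _ Mf qm ind qm' ind'.
  rewrite -(hausdorff_dim_pullback d' Mf.1).
  exact: hausdorff_dim_conformal qm (pullback_quasi_metric Mf.1 qm') three ind
    (pullback_induces Mf.1 Mf ind').
Qed.
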